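(* Let $M$ be a submonoid of $(\mathbb N_0,+)$. (a) $\mathfrak W_M$ is a bracket pattern category. (b) $\mathfrak W_{\mathbb N_0}=\emptyset$. If $M\neq\mathbb N_0$, then $\mathfrak W_M=\langle\!\langle\mathbb N_0\setminus M\rangle\!\rangle$ if $\mathbb N_0\setminus M$ is finite, and $\mathfrak W_M=\langle\!\langle\{0,\dots,v\}\setminus M\mid v\in\mathbb N,\ \{0,\dots,v\}\setminus M\neq\emptyset\rangle\!\rangle$ if $\mathbb N_0\setminus M$ is infinite. (c) $M=\mathbb N_0\setminus\bigcup_{w\in\mathfrak W_M}A(w)=\mathbb N_0\setminus\bigcup_{w\in\mathfrak W_M}w$.
   Context: $\mathbb N=\{1,2,\dots\}$, $\mathbb N_0=\mathbb N\cup\{0\}$. A bracket pattern is a non-empty finite subset $w\subseteq\mathbb N$; $\|w\|:=\max(w)$. For bracket patterns $w,w'$: superposition $w\cup w'$; for $j\in w$ the projection $\cap_j w:=\{i\in w\mid i\le j\}$; the dual $w^\dagger:=\{\|w\|-i\mid i\in\mathbb N_0,\ i<\|w\|,\ i\notin w\}$. A bracket pattern category is a (possibly empty) set of bracket patterns closed under superposition, duals and projections; $\langle\!\langle\mathfrak W\rangle\!\rangle$ denotes the smallest bracket pattern category containing a set $\mathfrak W$ of bracket patterns, and $\langle\!\langle w\rangle\!\rangle:=\langle\!\langle\{w\}\rangle\!\rangle$. The completion of a bracket pattern $w$ is $A(w):=\{j-i\mid j\in w,\ i\in\mathbb N_0,\ i\notin w,\ i<j\}$. A submonoid of $(\mathbb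 N_0,+)$ is a subset containing $0$ and closed under addition; for such $M$, $\mathfrak W_M:=\{w\mid w\text{ bracket pattern},\ A(w)\subseteq\mathbb N_0\setminus M\}$. *)

From mathcomp Require Import all_boot.
From mathcomp Require Import finmap.

Set Implicit Arguments.
Unset Strict Implicit.
Unset Printing Implicit Defensive.

Local Open Scope fset_scope.

Definition is_bp (w : {fset nat}) : Prop := w != fset0 /\ 0 \notin w.

Definition bp_norm (w : {fset nat}) : nat := \max_(i <- enum_fset w) i.

(* superposition w \cup w' is fsetU; projection \cap_j w *)
Definition bp_proj (j : nat) (w : {fset nat}) : {fset nat} :=
  [fset i in w | i <= j].

Definition bp_dual (w : {fset nat}) : {fset nat} :=
  [fset bp_norm w - i | i in [fset i in iota 0 (bp_norm w) | i \notin w]].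

Definition is_bp_cat (C : {fset nat} -> Prop) : Prop :=
  [/\ (forall w, C w -> is_bp w),
      (forall w w', C w -> C w' -> C (w `|` w')),
      (forall w, C w -> C (bp_dual w)) &
      (forall w j, C w -> j \in w -> C (bp_proj j w))].

Definition bp_gen (W : {fset nat} -> Prop) (w : {fset nat}) : Prop :=
  forall C, is_bp_cat C -> (forall x, W x -> C x) -> C w.

Definition completion (w : {fset nat}) (n : nat) : Prop :=
  exists j i, [/\ j \in w, i < j, i \notin w & n = j - i].

Definition submonoid (M : nat -> Prop) : Prop :=
  M 0 /\ (forall a b, M a -> M b -> M (addn a b)).

Definition WM (M : nat -> Prop) (w : {fset nat}) : Prop :=
  is_bp w /\ (forall n, completion w n -> ~ M n).

(** A gap [j] of [M] lying in some [w] of [W_M] drags along the dual of the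
    set [G_j] of gaps up to [j]: with norm [j], that dual is
    [{j - i | i < j, i \in M}], it contains [j], and it is contained in [w],
    since a missing [j - i] would put [j - (j - i) = i \in M] into [A(w)].
    So [w] is the superposition of the duals of its [G_j], and each [G_j] is
    a projection of [N_0 \ M], or one of the generators in the infinite case.
    Conversely a nonempty finite set of gaps containing every gap below its
    elements lies in [W_M]: if [i < j] with [i] outside and [j] inside, then
    [i \in M], so [j - i \in M] would give [j = (j - i) + i \in M].
    For a gap [n], the set [G_n] itself witnesses (c). *)

From mathcomp Require Import all_boot.
From mathcomp Require Import finmap.
From Stdlib Require Import Classical.

Set Implicit Arguments.
Unset Strict Implicit.
Unset Printing Implicit Defensive.

Local Open Scope fset_scope.

Lemma leq_bp_norm (w : {fset nat}) x : x \in w -> x <= bp_norm w.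
Proof. by move=> xw; apply: (leq_bigmax_seq x). Qed.

Lemma bp_norm_leq (w : {fset nat}) m :
  (forall x, x \in w -> x <= m) -> bp_norm w <= m.
Proof. by move=> le_wm; apply/bigmax_leqP_seq => x xw _; apply: le_wm. Qed.

Lemma bp_norm_eq (w : {fset nat}) j :
  j \in w -> (forall x, x \in w -> x <= j) -> bp_norm w = j.
Proof. by move=> jw le_wj; apply/eqP; rewrite eqn_leq bp_norm_leq ?leq_bp_norm. Qed.

Lemma bp_norm_in (w : {fset nat}) : w != fset0 -> bp_norm w \in w.
Proof.
case/fset0Pn=> x xw; apply/negPn/negP => Nw.
have lt_wN y : y \in w -> y < bp_norm w.
  by move=> yw; rewrite ltn_neqAle leq_bp_norm // andbT; apply: contraNneq Nw => <-.
have le_NpN : bp_norm w <= (bp_norm w).-1.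
  by apply: bp_norm_leq => y /lt_wN; case: (bp_norm w).
by move: (lt_wN x xw) le_NpN; case: (bp_norm w) => // n _; rewrite ltnn.
Qed.

Lemma mem_bp_dual (w : {fset nat}) a :
  a \in bp_dual w <-> exists2 i, i < bp_norm w & i \notin w /\ a = bp_norm w - i.
Proof.
split => [/imfsetP [i /=] | [i iN [iw ->]]].
  by rewrite !inE mem_iota add0n => /andP [iN iw] ->; exists i.
by apply/imfsetP; exists i; rewrite //= !inE mem_iota add0n iN iw.
Qed.

Lemma mem_bp_proj (w : {fset nat}) j x : (x \in bp_proj j w) = (x \in w) && (x <= j).
Proof. by rewrite !inE. Qed.

Lemma bp_pos (w : {fset nat}) j : is_bp w -> j \in w -> 0 < j.
Proof. by case=> _ w0 jw; rewrite lt0n; apply: contraNneq w0 => <-. Qed.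

Lemma completion_mem (w : {fset nat}) j : is_bp w -> j \in w -> completion w j.
Proof. by move=> bp_w jw; exists j, 0; rewrite subn0 (bp_pos bp_w jw); case: bp_w. Qed.

Lemma setU_closed_cover (C : {fset nat} -> Prop) (w : {fset nat}) :
  (forall u v, C u -> C v -> C (u `|` v)) -> w != fset0 ->
  (forall j, j \in w -> exists P, [/\ C P, j \in P & P `<=` w]) -> C w.
Proof.
move=> CU w_ne0 coverw.
suff /(_ w (fsubset_refl w)) [w0 | [P [CP wP Pw]]] :
    forall s, s `<=` w -> s = fset0 \/ exists P, [/\ C P, s `<=` P & P `<=` w].
- by rewrite w0 eqxx in w_ne0.
- by have /eqP <- : P == w by rewrite eqEfsubset Pw.
elim/fset1U_rect => [|x s _ IHs]; first by left.
rewrite fsubUset fsub1set => /andP [xw sw]; right.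
have [Q [CQ xQ Qw]] := coverw x xw.
have [-> | [P [CP sP Pw]]] := IHs sw.
  by exists Q; rewrite fsetU0 fsub1set.
exists (Q `|` P); split; [exact: CU | | by rewrite fsubUset Qw Pw].
by rewrite fsetUSS ?fsub1set.
Qed.

Section Generated.

Variable W : {fset nat} -> Prop.

Lemma bp_gen_base w : W w -> bp_gen W w.
Proof. by move=> Ww C _; apply. Qed.

Lemma bp_gen_min (C : {fset nat} -> Prop) w :
  is_bp_cat C -> (forall x, W x -> C x) -> bp_gen W w -> C w.
Proof. by move=> catC WC; apply. Qed.

Lemma bp_genU u v : bp_gen W u -> bp_gen W v -> bp_gen W (u `|` v).
Proof.
by move=> Wu Wv C catC WC; have [_ CU _ _] := catC; apply: CU; [apply: Wu | apply: Wv].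
Qed.

Lemma bp_gen_dual w : bp_gen W w -> bp_gen W (bp_dual w).
Proof. by move=> Ww C catC WC; have [_ _ Cd _] := catC; apply: Cd; apply: Ww. Qed.

Lemma bp_gen_proj w j : bp_gen W w -> j \in w -> bp_gen W (bp_proj j w).
Proof. by move=> Ww jw C catC WC; have [_ _ _ Cp] := catC; apply: Cp jw; apply: Ww. Qed.

End Generated.

Section SubmonoidPatterns.

Variable M : nat -> Prop.

Definition gaps_upto (v : nat) (G : {fset nat}) : Prop :=
  forall n, n \in G <-> n <= v /\ ~ M n.

Lemma WM_setU w w' : WM M w -> WM M w' -> WM M (w `|` w').
Proof.
move=> [[w_ne0 w0] Aw] [[_ w'0] Aw']; split.
  split; last by rewrite inE negb_or w0.
  by apply: contraNneq w_ne0 => /eqP; rewrite fsetU_eq0 => /andP [].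
move=> _ [j [i [+ ij + ->]]]; rewrite !inE negb_or => /orP [jw|jw] /andP [iw iw'].
  by apply: Aw; exists j, i.
by apply: Aw'; exists j, i.
Qed.

Lemma WM_proj w j : WM M w -> j \in w -> WM M (bp_proj j w).
Proof.
move=> [[_ w0] Aw] jw; split.
  by split; [apply/fset0Pn; exists j | ]; rewrite mem_bp_proj ?jw ?leqnn // negb_and w0.
move=> _ [k [i [+ ik + ->]]]; rewrite !mem_bp_proj negb_and => /andP [kw kj] /orP [iw|].
  by apply: Aw; exists k, i.
by rewrite -ltnNge => /(leq_ltn_trans kj)/(ltn_trans ik); rewrite ltnn.
Qed.

Lemma WM_dual w : WM M w -> WM M (bp_dual w).
Proof.
move=> [bp_w Aw]; have [w_ne0 w0] := bp_w.
set N := bp_norm w; have Nw : N \in w := bp_norm_in w_ne0.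
have N_gt0 : 0 < N := bp_pos bp_w Nw.
split.
  split; first by apply/fset0Pn; exists N; apply/mem_bp_dual; exists 0; rewrite ?subn0.
  by apply/negP => /mem_bp_dual [i iN [_ /esym/eqP]]; rewrite subn_eq0 leqNgt iN.
move=> _ [_ [b [/mem_bp_dual [i iN [iw ->]] bi bd ->]]].
have bN : b < N by apply: leq_trans bi (leq_subr _ _).
have Nbw : N - b \in w.
  case: b bi bd bN => [|b] _ bd bN; first by rewrite subn0.
  apply: contraNT bd => Nbw; apply/mem_bp_dual; exists (N - b.+1).
    by rewrite ltn_subrL.
  by rewrite subKn // ltnW.
by apply: Aw; exists (N - b), i; rewrite ltn_subRL addnC -ltn_subRL subnAC.
Qed.

Lemma WM_bp_cat : is_bp_cat (WM M).
Proof.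
by split; [move=> w [] | exact: WM_setU | exact: WM_dual | move=> w j; exact: WM_proj].
Qed.

Lemma WM_gap w j : WM M w -> j \in w -> ~ M j.
Proof. by case=> bp_w Aw jw; apply/Aw/completion_mem. Qed.

Hypothesis HM : submonoid M.

Lemma gaps_upto_dual_sub w j G : WM M w -> j \in w -> gaps_upto j G ->
  j \in bp_dual G /\ bp_dual G `<=` w.
Proof.
move=> Ww jw gapsG; have [_ Aw] := Ww.
have NG : bp_norm G = j.
  by apply: bp_norm_eq => [|x /gapsG []//]; apply/gapsG; split => //; apply: WM_gap jw.
split.
  apply/mem_bp_dual; exists 0; rewrite NG ?subn0 ?(bp_pos Ww.1 jw) //.
  by split => //; apply/negP => /gapsG [_]; case: HM.
apply/fsubsetP => a /mem_bp_dual [i]; rewrite NG => ij [iG ->].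
have Mi : M i.
  by apply: NNPP => nMi; case/negP: iG; apply/gapsG; split => //; apply: ltnW.
case: i ij {iG} Mi => [|i] ij Mi; first by rewrite subn0.
apply: contraT => jiw; case: (Aw i.+1 _ Mi); exists j, (j - i.+1).
by split; rewrite ?ltn_subrL ?subKn ?(bp_pos Ww.1 jw) // ltnW.
Qed.

Lemma WM_sub_bp_gen (W : {fset nat} -> Prop) w :
  (forall j, ~ M j -> exists2 G, bp_gen W G & gaps_upto j G) ->
  WM M w -> bp_gen W w.
Proof.
move=> gensW Ww; apply: setU_closed_cover; [exact: bp_genU | by case: Ww => [[]] |].
move=> j jw; have [G genG gapsG] := gensW j (WM_gap Ww jw).
have [jdG dGw] := gaps_upto_dual_sub Ww jw gapsG.
by exists (bp_dual G); split => //; apply: bp_gen_dual.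
Qed.

Lemma WM_gap_closed (x : {fset nat}) :
  x != fset0 -> (forall n, n \in x -> ~ M n) ->
  (forall i j, j \in x -> i < j -> ~ M i -> i \in x) -> WM M x.
Proof.
case: HM => M0 MD x_ne0 gaps_x closed_x; split.
  by split => //; apply/negP => /gaps_x.
move=> _ [j [i [jx ij ix ->]]] Mji.
have Mi : M i by apply: NNPP => nMi; case/negP: ix; apply: closed_x jx ij nMi.
by apply: (gaps_x j jx); rewrite -(subnK (ltnW ij)); apply: MD.
Qed.

Lemma gap_pos j : ~ M j -> 0 < j.
Proof. by case: HM; case: j. Qed.

Lemma gaps_upto_WM v G : G != fset0 -> gaps_upto v G -> WM M G.
Proof.
move=> G_ne0 gapsG; apply: WM_gap_closed => //.
- by move=> n /gapsG [].
- move=> i j /gapsG [jv _] ij nMi; apply/gapsG.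
  by split => //; apply: leq_trans (ltnW ij) jv.
Qed.

Lemma exists_gaps_upto v : exists G, gaps_upto v G.
Proof.
case: HM => M0 _; elim: v => [|v [G gapsG]].
  by exists fset0 => n; rewrite inE leqn0; split => // [[/eqP -> []]].
have le_vS n : n <= v.+1 -> n = v.+1 \/ n <= v.
  by rewrite leq_eqVlt ltnS => /orP [/eqP|]; [left | right].
have [Mv1 | nMv1] := classic (M v.+1).
  exists G => n; rewrite gapsG; split=> [[nv nMn] | [/le_vS [nv|nv] nMn]] //.
  - by split => //; apply: leqW.
  - by rewrite nv in nMn.
exists (v.+1 |` G) => n; split.
  by case/fset1UP => [-> | /gapsG [nv nMn]]; split => //; apply: leqW.
by case=> /le_vS [-> | nv] nMn; apply/fset1UP; [left | right; apply/gapsG].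
Qed.

Lemma WM_bp_gen (W : {fset nat} -> Prop) :
  (forall x, W x -> WM M x) ->
  (forall j, ~ M j -> exists2 G, bp_gen W G & gaps_upto j G) ->
  forall w, WM M w <-> bp_gen W w.
Proof.
move=> WWM gensW w; split; first exact: WM_sub_bp_gen.
exact: bp_gen_min WM_bp_cat WWM.
Qed.

Lemma gap_in_WM n : ~ M n -> exists2 w, WM M w & n \in w.
Proof.
move=> nMn; have [G gapsG] := exists_gaps_upto n.
have nG : n \in G by apply/gapsG.
by exists G => //; apply: gaps_upto_WM gapsG; apply/fset0Pn; exists n.
Qed.

Lemma WM_gen_complement S : (exists n, ~ M n) -> (forall n, n \in S <-> ~ M n) ->
  forall w, WM M w <-> bp_gen (fun x => x = S) w.
Proof.
move=> [n0 nMn0] gapsS; apply: WM_bp_gen => [_ -> | j nMj].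
  apply: WM_gap_closed => [||i j _ _ /gapsS] //; last by move=> n /gapsS.
  by apply/fset0Pn; exists n0; apply/gapsS.
exists (bp_proj j S); first by apply: bp_gen_proj; [apply: bp_gen_base | apply/gapsS].
by move=> n; rewrite mem_bp_proj; split=> [/andP [/gapsS] | [-> /gapsS ->]].
Qed.

Lemma WM_gen_gaps_upto w :
  WM M w <-> bp_gen (fun x => exists v, [/\ 0 < v, x != fset0 & gaps_upto v x]) w.
Proof.
apply: WM_bp_gen => [x [v [_ x_ne0 gapsx]] | j nMj].
  exact: gaps_upto_WM x_ne0 gapsx.
have [G gapsG] := exists_gaps_upto j; have jG : j \in G by apply/gapsG.
exists G => //; apply: bp_gen_base; exists j; split => //.
- exact: gap_pos nMj.
- by apply/fset0Pn; exists j.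
Qed.

Lemma submonoid_no_completion n : M n <-> ~ exists w, WM M w /\ completion w n.
Proof.
split=> [Mn [w [[_ Aw] /Aw]] // | noA]; apply: NNPP => nMn; apply: noA.
have [w Ww nw] := gap_in_WM nMn.
by exists w; split => //; apply: completion_mem Ww.1 nw.
Qed.

Lemma submonoid_notin_WM n : M n <-> ~ exists w, WM M w /\ n \in w.
Proof.
split=> [Mn [w [Ww /(WM_gap Ww)]] // | noW]; apply: NNPP => nMn; apply: noW.
by have [w Ww nw] := gap_in_WM nMn; exists w.
Qed.

End SubmonoidPatterns.

Theorem lemma7p16 (M : nat -> Prop) (HM : submonoid M) :
  (* (a) *)
  is_bp_cat (WM M) /\
  (* (b) *)
  ((forall n, M n) -> forall w, ~ WM M w) /\
  ((exists n, ~ M n) ->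
     (forall S : {fset nat}, (forall n, n \in S <-> ~ M n) ->
        forall w, WM M w <-> bp_gen (fun x => x = S) w) /\
     ((~ exists S : {fset nat}, forall n, n \in S <-> ~ M n) ->
        forall w, WM M w <->
          bp_gen (fun x => exists v, [/\ 0 < v, x != fset0 &
                    forall n, n \in x <-> (n <= v /\ ~ M n)]) w)) /\
  (* (c) *)
  (forall n, M n <-> ~ exists w, WM M w /\ completion w n) /\
  (forall n, M n <-> ~ exists w, WM M w /\ n \in w).
Proof.
split; first exact: WM_bp_cat.
split.
  by move=> allM w Ww; have [[/fset0Pn [j jw] _] _] := Ww; apply: (WM_gap Ww jw).
split.
  move=> nM_ex; split=> [S gapsS w | _ w]; first exact: WM_gen_complement.
  exact: WM_gen_gaps_upto.
by split=> n; [apply: submonoid_no_completion | apply: submonoid_notin_WM].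
Qed.
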